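(* Let $t=[1\ 0\ 0\ 0\ 0\ 0\ 0\ 0]$ (row vector), $u=[1\ 1\ 1\ 1\ 1\ 2\ 1\ 4]^T$ (column vector), and \[\gamma(0)=\begin{bmatrix} 0&1&0&0&0&0&0&0\\ 0&0&0&1&0&0&0&0\\ -1&1&0&1&0&0&0&0\\ 0&0&0&0&1&0&0&0\\ 0&0&0&0&0&0&1&0\\ -1&0&0&2&1&0&0&0\\ 1&-1&0&-3&3&0&1&0\\ -1&-1&0&2&3&0&1&0 \end{bmatrix},\quad \gamma(1)=\begin{bmatrix} 0&0&1&0&0&0&0&0\\ 0&0&1&0&0&0&0&0\\ 0&0&0&0&0&0&0&0\\ 0&0&0&0&0&1&0&0\\ 0&0&0&0&0&1&0&0\\ 0&0&0&0&0&0&0&0\\ 0&0&0&0&0&0&0&1\\ 0&0&0&0&0&0&0&0 \end{bmatrix},\] extended to a monoid morphism $\gamma:\{0,1\}^*\to\mathbb{Z}^{8\times 8}$ by $\gamma(w_1w_2\cdots w_m)=\gamma(w_1)\gamma(w_2)\cdots\gamma(w_m)$. Then for every $n\geq 0$, if $z=z_1\cdots z_m$ is the canonical Fibonacci representation of $n$ and $z^R=z_m\cdots z_1$ is its reversal, we have $t\,\gamma(z^R)\,u=V(n)$. In particular, $V$ is Fibonacci-regular.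
   Context: Fibonacci numbers: $F_0=0$, $F_1=1$, $F_{m+2}=F_{m+1}+F_m$. For a word $k_m\cdots k_0$ of nonnegative integer digits, $[k_m\cdots k_0]_F=\sum_{i=0}^m k_iF_{i+2}$. The canonical Fibonacci representation of $n\geq 0$ is the unique binary word $z$ with no leading zero and no two consecutive $1$s such that $[z]_F=n$ (the empty word for $n=0$). Standard Fibonacci words: $f_{-1}=b$, $f_0=a$, $f_{m+1}=f_mf_{m-1}$. The Fibonacci word ${\bf f}=\lim f_m$, with prefix of length $j$ denoted ${\bf f}(0..j]$. $V(N)$ is the number of factorizations of ${\bf f}(0..N]$ as $f_m^{k_m}\cdots f_0^{k_0}$ with all $k_i\geq 0$ (into standard words $f_i$, $i\geq0$, in non-strictly decreasing order of index), counted up to leading zero exponents; $V(0)=1$. A sequence $s$ is Fibonacci-regular if there are a row vector $v$, a column vector $w$ and a matrix-valued morphism $\rho$ on $\{0,1\}^*$ with $s([z]_F)=v\rho(z)w$ for all canonical representations $z$. *)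

From mathcomp Require Import all_boot all_order all_algebra.
Set Implicit Arguments. Unset Strict Implicit. Unset Printing Implicit Defensive.
Import GRing.Theory Num.Theory.

Fixpoint fib (n : nat) : nat :=
  match n with
  | 0 => 0
  | 1 => 1
  | (m.+1 as p).+1 => fib p + fib m
  end.

(* Binary words are written most significant digit first: the word
   z = k_m ... k_0 is the list [:: k_m; ...; k_0].
   [z]_F = \sum_i k_i F_{i+2}. *)
Definition fibval (z : seq bool) : nat :=
  \sum_(i < size z) nth false (rev z) i * fib i.+2.

Definition canonical_fib_rep (n : nat) (z : seq bool) : Prop :=
  [/\ head true z = true,
      (forall i, i.+1 < size z -> ~~ (nth false z i && nth false z i.+1))
    & fibval z = n].

Definition la : bool := false.
Definition lb : bool := true.

Fixpoint stdw (m : nat) : seq bool :=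
  match m with
  | 0 => [:: la]
  | 1 => [:: la; lb]
  | (k.+1 as p).+1 => stdw p ++ stdw k
  end.

(* Prefix of length N of the infinite Fibonacci word f = lim f_m.
   Since f_m is a prefix of f_{m+1} and |f_N| = F_{N+2} >= N, the prefix
   of length N of f is the prefix of length N of f_N. *)
Definition fibprefix (N : nat) : seq bool := take N (stdw N).

(* The word f_m^{k_m} ... f_0^{k_0} for ks = [:: k_0; ...; k_m]. *)
Definition facword (ks : seq nat) : seq bool :=
  flatten (rev [seq flatten (nseq (nth 0 ks i) (stdw i)) | i <- iota 0 (size ks)]).

(* A factorization of f(0..N] counted up to leading zero exponents:
   exponent sequences [:: k_0; ...; k_m] with no leading zero exponent
   (k_m <> 0, or the empty sequence). *)
Definition is_factorization (N : nat) (ks : seq nat) : Prop :=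
  (ks = [::] \/ last 0 ks <> 0) /\ facword ks = fibprefix N.

Definition V_is (N v : nat) : Prop :=
  exists s : seq (seq nat),
    [/\ uniq s, (forall ks, ks \in s <-> is_factorization N ks) & size s = v].

Local Open Scope ring_scope.

Definition mx_of (L : seq (seq int)) : 'M[int]_8 :=
  \matrix_(i < 8, j < 8) nth 0 (nth [::] L i) j.

Definition gamma0 : 'M[int]_8 := mx_of
  [:: [:: 0; 1; 0; 0; 0; 0; 0; 0];
      [:: 0; 0; 0; 1; 0; 0; 0; 0];
      [:: -1; 1; 0; 1; 0; 0; 0; 0];
      [:: 0; 0; 0; 0; 1; 0; 0; 0];
      [:: 0; 0; 0; 0; 0; 0; 1; 0];
      [:: -1; 0; 0; 2; 1; 0; 0; 0];
      [:: 1; -1; 0; -3; 3; 0; 1; 0];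
      [:: -1; -1; 0; 2; 3; 0; 1; 0]].

Definition gamma1 : 'M[int]_8 := mx_of
  [:: [:: 0; 0; 1; 0; 0; 0; 0; 0];
      [:: 0; 0; 1; 0; 0; 0; 0; 0];
      [:: 0; 0; 0; 0; 0; 0; 0; 0];
      [:: 0; 0; 0; 0; 0; 1; 0; 0];
      [:: 0; 0; 0; 0; 0; 1; 0; 0];
      [:: 0; 0; 0; 0; 0; 0; 0; 0];
      [:: 0; 0; 0; 0; 0; 0; 0; 1];
      [:: 0; 0; 0; 0; 0; 0; 0; 0]].

Definition gamma_letter (b : bool) : 'M[int]_8 := if b then gamma1 else gamma0.

Definition gamma (w : seq bool) : 'M[int]_8 :=
  foldr (fun b M => gamma_letter b *m M) 1%:M w.

Definition tvec : 'rV[int]_8 := \row_(j < 8) nth 0 [:: 1; 0; 0; 0; 0; 0; 0; 0] j.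
Definition uvec : 'cV[int]_8 := \col_(i < 8) nth 0 [:: 1; 1; 1; 1; 1; 2; 1; 4] i.

From mathcomp Require Import all_boot all_order all_algebra zify.
Set Implicit Arguments. Unset Strict Implicit. Unset Printing Implicit Defensive.

(* With phi the Fibonacci morphism a |-> ab, b |-> a, reading the canonical
   representation z of N from its leading digit builds the prefix f(0..N]
   digit by digit: P(z d) = phi(P(z)) a^d.  A factorization
   f_m^{k_m} ... f_0^{k_0} is phi of f_{m-1}^{k_m} ... f_0^{k_1} followed by
   a^{k_0}; comparing last exponents gives
     nfact (phi(S) a) = nfact (S b) + nfact (phi(S)),   nfact (phi(S) ab) = nfact (S a),
   so the number of factorizations of phi(U) y is a sum of numbers of
   factorizations of words U y'.  A ten-state automaton, checked by
   computation, follows z and maintains a split P(z) = U sigma with sigma from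
   a finite list, together with the vector S of counts nfact(U y) for
   finitely many y; gamma(z^R) u equals a fixed integer matrix times S,
   modulo linear relations known to hold for S, and the first coordinate
   of gamma(z^R) u is nfact(U sigma) = V(N). *)

Notation word := (seq bool).

(** * The Fibonacci morphism *)

Definition phi_letter (c : bool) : word := if c then [:: false] else [:: false; true].
Definition phi (w : word) : word := flatten (map phi_letter w).

Lemma phi_cat u v : phi (u ++ v) = phi u ++ phi v.
Proof. by rewrite /phi map_cat flatten_cat. Qed.

Lemma phi_cons c u : phi (c :: u) = phi_letter c ++ phi u.
Proof. by []. Qed.

Lemma phi_rcons u c : phi (rcons u c) = phi u ++ phi_letter c.
Proof. by rewrite -cats1 phi_cat /phi /= cats0. Qed.

Lemma phi_flatten L : phi (flatten L) = flatten (map phi L).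
Proof. by elim: L => [|x L IH] //=; rewrite phi_cat IH. Qed.

Lemma head_phi w : ~~ head false (phi w).
Proof. by case: w => [|[] w]. Qed.

Lemma phi_inj : injective phi.
Proof.
elim=> [|c x IH] [|d y] //=; [by case: d | by case: c |].
rewrite !phi_cons; case: c; case: d => -[] //=.
- by move/IH ->.
- by move=> hx; have := head_phi x; rewrite hx.
- by move=> hy; have := head_phi y; rewrite -hy.
- by move/IH ->.
Qed.

Lemma size_phi w : size (phi w) = size w + count negb w.
Proof. by elim: w => [|c w IH] //=; rewrite size_cat IH; case: c => /=; lia. Qed.

Lemma stdwSS k : stdw k.+2 = stdw k.+1 ++ stdw k.
Proof. by []. Qed.

Lemma phi_stdw n : phi (stdw n) = stdw n.+1.
Proof. by elim/ltn_ind: n => -[|[|n]] IH //; rewrite stdwSS phi_cat !IH. Qed.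

Lemma size_stdw n : size (stdw n) = fib n.+2.
Proof. by elim/ltn_ind: n => -[|[|n]] IH //; rewrite stdwSS size_cat !IH // addnC. Qed.

Lemma fibSS n : fib n.+2 = fib n.+1 + fib n.
Proof. by []. Qed.

Lemma ltn_fib n : n < fib n.+2.
Proof.
suff: n < fib n.+2 /\ 0 < fib n.+1 by case.
by elim: n => [|n [IH1 IH2]] //; rewrite !fibSS in IH1 *; lia.
Qed.

Lemma prefix_stdw m n : m <= n -> prefix (stdw m) (stdw n).
Proof.
apply: (homo_leq (r := fun u v => prefix u v)) => [u|v u w|[|i]] //.
- exact: prefix_refl.
- exact: prefix_trans.
- by rewrite stdwSS prefix_prefix.
Qed.

(** * Prefixes of the Fibonacci word *)

Definition fibpre (z : word) : word :=
  foldl (fun p d => phi p ++ (if d then [:: false] else [::])) [::] z.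

Lemma fibpre_rcons z d :
  fibpre (rcons z d) = phi (fibpre z) ++ (if d then [:: false] else [::]).
Proof. by rewrite /fibpre foldl_rcons. Qed.

Lemma fibpre_cons d z : fibpre (d :: z) = (if d then stdw (size z) else [::]) ++ fibpre z.
Proof.
elim/last_ind: z => [|z e IH]; first by case: d.
rewrite -rcons_cons !fibpre_rcons IH phi_cat catA size_rcons.
by case: d {IH} => //; rewrite phi_stdw.
Qed.

Lemma fibval_cons d z : fibval (d :: z) = d * fib (size z).+2 + fibval z.
Proof.
rewrite /fibval /= rev_cons big_ord_recr /= nth_rcons size_rev ltnn eqxx addnC.
by congr (_ + _); apply: eq_bigr => i _; rewrite nth_rcons size_rev ltn_ord.
Qed.

Lemma size_fibpre z : size (fibpre z) = fibval z.
Proof.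
elim: z => [|d z IH]; first by rewrite /fibval big_ord0.
by rewrite fibpre_cons fibval_cons size_cat IH; case: d; rewrite ?size_stdw ?mul1n.
Qed.

Definition no11 (z : word) : Prop :=
  forall i, i.+1 < size z -> ~~ (nth false z i && nth false z i.+1).

Lemma no11_cons d z : no11 (d :: z) -> no11 z /\ (d -> head false z = false).
Proof.
move=> h; split=> [i hi|hd]; first exact: (h i.+1).
by case: z h => [|e z] // /(_ 0 isT) /=; rewrite hd; case: e.
Qed.

Lemma no11_rcons z d : no11 (rcons z d) -> no11 z /\ (d -> ~~ last false z).
Proof.
move=> h; split=> [i hi|hd].
  by have := h i; rewrite size_rcons !nth_rcons hi (ltnW hi); apply; lia.
case: z h => [|x z] // /(_ (size z)); rewrite size_rcons /= ltnSn => /(_ isT).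
rewrite -rcons_cons nth_rcons /= ltnSn nth_rcons /= ltnn eqxx hd andbT.
by rewrite (last_nth false).
Qed.

Lemma prefix_fibpre z : no11 z -> prefix (fibpre z) (stdw (size z)).
Proof.
move: {2}(size z) (leqnn (size z)) => n; elim: n z => [|n IH] [|d z] //= hn hv.
have [hvz hd] := no11_cons hv; rewrite fibpre_cons {hv}.
case: d hd => [hd|_]; last exact: prefix_trans (IH z hn hvz) (prefix_stdw (leqnSn _)).
case: z hn hvz hd => [|[] z] // hn hvz hd; first by have := hd isT.
have [hv' _] := no11_cons hvz.
change (prefix (stdw (size z).+1 ++ fibpre z) (stdw (size z).+2)).
by rewrite stdwSS prefix_catr // eqxx IH //; apply: ltnW.
Qed.

Lemma fibprefix_fibval z : no11 z -> fibprefix (fibval z) = fibpre z.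
Proof.
move=> /prefix_fibpre hpre; rewrite /fibprefix -size_fibpre.
set N := size (fibpre z).
have hN : N <= size (stdw N) by rewrite size_stdw ltnW // ltn_fib.
have [t' hM] := prefixP (prefix_stdw (leq_maxl N (size z))).
have [t ht] := prefixP (prefix_trans hpre (prefix_stdw (leq_maxr N (size z)))).
by rewrite -(takel_cat t' hN) -hM ht take_size_cat.
Qed.

(** * Counting factorizations *)

Lemma facword_cons k r : facword (k :: r) = phi (facword r) ++ nseq k false.
Proof.
rewrite /facword /= -[1]/(1 + 0) iotaDl rev_cons -cats1 flatten_cat /= cats0.
have -> : flatten (nseq k (stdw 0)) = nseq k false by elim: k => //= k ->.
congr (_ ++ _); rewrite phi_flatten map_rev -!map_comp; congr (flatten (rev _)).
by apply: eq_map => i /=; rewrite phi_flatten map_nseq phi_stdw.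
Qed.

Lemma facword_consS k r : facword (k.+1 :: r) = rcons (facword (k :: r)) false.
Proof. by rewrite !facword_cons -cats1 -catA -addn1 nseqD. Qed.

Fixpoint has_bb (w : word) : bool :=
  if w is x :: r then (x && head false r) || has_bb r else false.

Lemma has_bb_cat u v :
  has_bb (u ++ v) = [|| has_bb u, has_bb v | last false u && head false v].
Proof.
elim: u => [|x u IH] /=; first by case: (has_bb v).
rewrite IH; case: u {IH} => [|y u] /=; first by case: x; case: (has_bb v); case: (head false v).
by case: x; case: y; case: (has_bb u); case: (has_bb v); case: (last _ u && _).
Qed.

Lemma has_bb_phi w : ~~ has_bb (phi w).
Proof.
elim: w => [|c w IH] //; rewrite phi_cons has_bb_cat (negbTE IH).
by have := head_phi w; case: (head false _) => // _; case: c; rewrite /= ?andbF.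
Qed.

Lemma has_bb_facword ks : ~~ has_bb (facword ks).
Proof.
case: ks => [|k r] //; rewrite facword_cons has_bb_cat (negbTE (has_bb_phi _)) /=.
have -> : has_bb (nseq k false) = false by elim: k.
by case: k => [|k] /=; rewrite andbF.
Qed.

Lemma head_facword ks : ~~ head false (facword ks).
Proof.
case: ks => [|k r] //; rewrite facword_cons.
by have := head_phi (facword r); case: (phi _) => [|y s] //= _; case: k.
Qed.

Definition no_lead0 (ks : seq nat) : bool := (ks == [::]) || (last 0 ks != 0).

Definition is_fact (x : word) (ks : seq nat) : bool := no_lead0 ks && (facword ks == x).

Lemma size_facword ks : no_lead0 ks -> size ks <= size (facword ks).
Proof.
elim: ks => [|k r IH] // hks; rewrite facword_cons size_cat size_phi size_nseq.
case: r IH hks => [|y r] IH; first by case: k.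
move=> /IH hr; have : 0 < count negb (facword (y :: r)).
  have := head_facword (y :: r).
  by case: (facword _) hr => [|[] s] //= _ _; rewrite add1n.
by move: hr => /=; lia.
Qed.

Lemma exponent_facword ks k : k \in ks -> k <= size (facword ks).
Proof.
elim: ks => [|k' r IH] //; rewrite inE facword_cons size_cat size_nseq size_phi.
by case/orP => [/eqP ->|/IH]; lia.
Qed.

Fixpoint bounded_seqs (n L : nat) : seq (seq nat) :=
  if n is n'.+1 then flatten [seq [seq i :: s | s <- bounded_seqs n' L] | i <- iota 0 L]
  else [:: [::]].

Lemma mem_bounded_seqs L s : all (fun i => i < L) s -> s \in bounded_seqs (size s) L.
Proof.
elim: s => [|i s IH] //= /andP [hi hs]; apply/flattenP.
exists [seq i :: t | t <- bounded_seqs (size s) L].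
  by apply/mapP; exists i; rewrite ?mem_iota.
by apply/mapP; exists s; rewrite ?IH.
Qed.

Definition facts (x : word) : seq (seq nat) :=
  undup [seq ks <- flatten [seq bounded_seqs n (size x).+1 | n <- iota 0 (size x).+2]
         | is_fact x ks].

Definition nfact (x : word) : nat := size (facts x).

Lemma mem_facts x ks : (ks \in facts x) = is_fact x ks.
Proof.
rewrite mem_undup mem_filter andb_idr // => /andP [/size_facword hsize /eqP hx].
rewrite hx in hsize; apply/flattenP; exists (bounded_seqs (size ks) (size x).+1).
  by apply/mapP; exists (size ks); rewrite // mem_iota /=; lia.
by apply/mem_bounded_seqs/allP => k /exponent_facword; rewrite hx ltnS.
Qed.

Lemma nfactE x s : uniq s -> (forall ks, (ks \in s) = is_fact x ks) -> nfact x = size s.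
Proof.
move=> hu hs; apply/perm_size/uniq_perm => //; first exact: undup_uniq.
by move=> ks; rewrite hs mem_facts.
Qed.

Lemma nfact_nil : nfact [::] = 1.
Proof.
rewrite (@nfactE [::] [:: [::]]) // => -[|k r] //; apply/esym/negbTE/andP => -[hv /eqP he].
by have := size_facword hv; rewrite he.
Qed.

Lemma nfact_has_bb x : has_bb x -> nfact x = 0.
Proof.
move=> hx; rewrite (@nfactE x [::]) // => ks; apply/esym/negbTE/andP => -[_ /eqP he].
by have := has_bb_facword ks; rewrite he hx.
Qed.

Lemma nfact_head_b x : head false x -> nfact x = 0.
Proof.
move=> hx; rewrite (@nfactE x [::]) // => ks; apply/esym/negbTE/andP => -[_ /eqP he].
by have := head_facword ks; rewrite he hx.
Qed.

Lemma count_facts_image x y (p : pred (seq nat)) (f : seq nat -> seq nat) :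
  (forall r r', is_fact y r -> is_fact y r' -> f r = f r' -> r = r') ->
  (forall r, is_fact y r -> p (f r) && is_fact x (f r)) ->
  (forall ks, p ks -> is_fact x ks -> exists2 r, is_fact y r & ks = f r) ->
  count p (facts x) = nfact y.
Proof.
move=> finj fto fonto; rewrite -size_filter /nfact -(size_map f (facts y)).
apply: perm_size; apply: uniq_perm; first exact: filter_uniq (undup_uniq _).
  by rewrite map_inj_in_uniq ?undup_uniq // => r r'; rewrite !mem_facts; apply: finj.
move=> ks; rewrite mem_filter mem_facts; apply/idP/mapP.
  by case/andP => /fonto h /h [r hr ->]; exists r; rewrite ?mem_facts.
by case=> r; rewrite mem_facts => /fto hr ->.
Qed.

Definition head_pos (ks : seq nat) : bool := 0 < head 0 ks.

Lemma is_fact_cons0 x r : is_fact (phi x) (0 :: r) = (r != [::]) && is_fact x r.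
Proof. by rewrite /is_fact facword_cons cats0 (inj_eq phi_inj); case: r. Qed.

Lemma nfact_phi T : T != [::] -> nfact (phi T) = nfact T + count head_pos (facts (phi T)).
Proof.
move=> hT; rewrite [LHS]/nfact -(count_predC head_pos) addnC; congr (_ + _).
apply: (count_facts_image (f := cons 0)) => [r r' _ _ [] //|r hr|[|[|k] r] // _].
- rewrite /= is_fact_cons0 hr andbT; apply: contra_neq hT => r0.
  by case/andP: hr => _ /eqP <-; rewrite r0.
- by case/andP => _ /eqP he; rewrite -(inj_eq phi_inj) -he eqxx in hT.
- by rewrite is_fact_cons0 => /andP [_ hr]; exists r.
Qed.

Definition incr (ks : seq nat) : seq nat := if ks is k :: r then k.+1 :: r else [:: 1].

Lemma facword_incr r : facword (incr r) = rcons (facword r) false.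
Proof. by case: r => [|k r]; rewrite ?facword_consS. Qed.

Lemma is_fact_incr x r : no_lead0 r -> is_fact (rcons x false) (incr r) = is_fact x r.
Proof.
move=> hr; rewrite /is_fact facword_incr (inj_eq (rcons_injl false)) hr; congr andb.
by case: r hr => [|k [|y r]].
Qed.

Lemma incr_inj r r' : no_lead0 r -> no_lead0 r' -> incr r = incr r' -> r = r'.
Proof.
case: r r' => [|k r] [|k' r'] //= hr hr' [].
- by move=> hk hr0; subst k' r'.
- by move=> hk hr0; subst k r.
- by move=> -> ->.
Qed.

Lemma incr_onto k r : no_lead0 (k.+1 :: r) -> exists2 r', no_lead0 r' & k.+1 :: r = incr r'.
Proof.
case: k r => [|k] [|y r] hr; first by exists [::].
- by exists [:: 0, y & r].
- by exists [:: k.+1].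
- by exists [:: k.+1, y & r].
Qed.

Lemma count_head_pos_rcons_a x : count head_pos (facts (rcons x false)) = nfact x.
Proof.
apply: (count_facts_image (f := incr)).
- by move=> r r' /andP [hr _] /andP [hr' _]; apply: incr_inj.
- move=> r hr; case/andP: (hr) => hr0 _; rewrite is_fact_incr // hr andbT.
  by case: r {hr hr0}.
- move=> [|[|k] r] // _ hks; have /andP [hv _] := hks; have [r' hr' hk] := incr_onto hv.
  by exists r'; rewrite // -is_fact_incr // -hk.
Qed.

Lemma count_head_pos_rcons_b x : count head_pos (facts (rcons x true)) = 0.
Proof.
apply/eqP; rewrite -leqn0 leqNgt -has_count; apply/hasPn => -[|[|k] r] //.
by rewrite mem_facts /is_fact facword_consS => /andP [_ /eqP /rcons_inj []].
Qed.

Lemma nfact_phi_a S : nfact (rcons (phi S) false) = nfact (rcons S true) + nfact (phi S).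
Proof.
have hS : rcons (phi S) false = phi (rcons S true) by rewrite phi_rcons cats1.
by rewrite hS nfact_phi -?size_eq0 ?size_rcons // -hS count_head_pos_rcons_a.
Qed.

Lemma nfact_phi_ab S : nfact (phi S ++ [:: false; true]) = nfact (rcons S false).
Proof.
have hS : phi S ++ [:: false; true] = rcons (rcons (phi S) false) true by rewrite -!cats1 -catA.
rewrite -[phi S ++ _]/(phi S ++ phi_letter false) -phi_rcons.
rewrite nfact_phi -?size_eq0 ?size_rcons //.
by rewrite phi_rcons hS count_head_pos_rcons_b addn0.
Qed.

(** * Pulling factorization counts back along the morphism *)

Fixpoint phi_preimage (z : word) : option word :=
  match z with
  | [::] => Some [::]
  | true :: _ => None
  | false :: true :: r => omap (cons false) (phi_preimage r)
  | false :: r => omap (cons true) (phi_preimage r)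
  end.

Lemma phi_preimageK z z' : phi_preimage z = Some z' -> phi z' = z.
Proof.
move: {2}(size z) (leqnn (size z)) => n; elim: n z z' => [|n IH] [|[] z] z' // hn.
- by case=> <-.
- by case=> <-.
case: z hn => [|[] r] hn; first by case=> <-.
  rewrite [phi_preimage _]/=; case E: (phi_preimage r) => [r'|] //= [<-].
  by rewrite phi_cons (IH r) //=; rewrite /= in hn; lia.
rewrite -[phi_preimage _]/(omap (cons true) (phi_preimage (false :: r))).
case E: (phi_preimage (false :: r)) => [r'|] //= [<-].
by rewrite phi_cons (IH (false :: r)).
Qed.

Fixpoint expand_rev (unil : bool) (r : word) : option (seq word) :=
  match r with
  | [::] => if unil then Some [:: [::]] else None
  | false :: _ => Some [:: rev r]
  | true :: r' => omap (cons (rev r)) (expand_rev unil r')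
  end.

Lemma nfact_expand_rev unil r U ys : expand_rev unil r = Some ys -> (unil -> U = [::]) ->
  nfact (phi (U ++ rev r)) = \sum_(y <- ys) nfact (U ++ y).
Proof.
elim: r ys => [|[] r IH] ys /=.
- by case: unil => // -[<-] /(_ isT) ->; rewrite big_seq1.
- case E: (expand_rev unil r) => [ys'|] //= [<-] hU.
  rewrite big_cons -(IH ys' E hU) rev_cons -rcons_cat phi_rcons cats1.
  by rewrite nfact_phi_a rcons_cat.
- move=> [<-] _; rewrite big_seq1 rev_cons -rcons_cat phi_rcons.
  by rewrite nfact_phi_ab rcons_cat.
Qed.

Definition expand (unil : bool) (z : word) : option (seq word) :=
  if has_bb z then Some [::] else
  match z with
  | true :: _ => if unil then Some [::] else None
  | _ => if phi_preimage z is Some z' then expand_rev unil (rev z') else None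
  end.

Lemma nfact_expand unil z U ys : expand unil z = Some ys -> (unil -> U = [::]) ->
  nfact (phi U ++ z) = \sum_(y <- ys | ~~ has_bb y) nfact (U ++ y).
Proof.
move=> hE hU; have -> : nfact (phi U ++ z) = \sum_(y <- ys) nfact (U ++ y).
  move: hE; rewrite /expand; case hb: (has_bb z).
    by case=> <-; rewrite big_nil nfact_has_bb // has_bb_cat hb orbT.
  case: z hb => [|[] z] _.
  - by move=> hE; have := nfact_expand_rev (r := [::]) hE hU; rewrite !cats0.
  - by case: unil hU => // /(_ isT) -> [<-]; rewrite big_nil nfact_head_b.
  case E: (phi_preimage (false :: z)) => [z'|] // hE.
  by rewrite -(phi_preimageK E) -phi_cat -(nfact_expand_rev hE hU) revK.
rewrite [RHS]big_mkcond; apply: eq_bigr => y _; case: ifPn => // /negPn hy.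
by rewrite nfact_has_bb // has_bb_cat hy orbT.
Qed.

Import GRing.Theory.
Local Open Scope ring_scope.

(* Lists read through nth 0 rather than MathComp matrices, so that the
   certificate can be checked by vm_compute (big operators are opaque). *)

Definition vsum (f : nat -> int) : int := foldr (fun k acc => f k + acc) 0 (iota 0 8).
Definition dot (r v : seq int) : int := vsum (fun k => r`_k * v`_k).
Definition mulmv (A : seq (seq int)) (v : seq int) : seq int := map (dot^~ v) A.
Definition lincomb (c : seq int) (A : seq (seq int)) : seq int :=
  mkseq (fun k => vsum (fun j => c`_j * (nth [::] A j)`_k)) 8.
Definition vadd (x y : seq int) : seq int := mkseq (fun k => x`_k + y`_k) 8.
Definition vsub (x y : seq int) : seq int := mkseq (fun k => x`_k - y`_k) 8.
Definition unitv (i : nat) : seq int := mkseq (fun k => (k == i)%:R) 8.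
Definition eqv (x y : seq int) : bool := all (fun k => x`_k == y`_k) (iota 0 8).
Definition indicator (Ys ys : seq word) : seq int :=
  foldr (fun y => vadd (unitv (index y Ys))) [::] ys.

Lemma vsumE f : vsum f = \sum_(k < 8) f k.
Proof.
have foldr_sum l : foldr (fun k acc => f k + acc) 0 l = \sum_(k <- l) f k.
  by elim: l => [|k l IH] /=; rewrite ?big_nil ?big_cons ?IH.
by rewrite /vsum foldr_sum -(big_mkord xpredT).
Qed.

Lemma dot_nil v : dot [::] v = 0.
Proof. by rewrite /dot vsumE big1 // => k _; rewrite nth_nil mul0r. Qed.

Lemma dot_eqv x y v : eqv x y -> dot x v = dot y v.
Proof.
move=> /allP hxy; rewrite /dot !vsumE; apply: eq_bigr => k _.
by have /eqP -> : x`_k == y`_k by apply: hxy; rewrite mem_iota /= ltn_ord.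
Qed.

Lemma dot_vadd x y v : dot (vadd x y) v = dot x v + dot y v.
Proof.
by rewrite /dot !vsumE -big_split; apply: eq_bigr => k _; rewrite nth_mkseq // mulrDl.
Qed.

Lemma dot_vsub x y v : dot (vsub x y) v = dot x v - dot y v.
Proof.
by rewrite /dot !vsumE -sumrB; apply: eq_bigr => k _; rewrite nth_mkseq // mulrBl.
Qed.

Lemma nth_mulmv A v j : (mulmv A v)`_j = dot (nth [::] A j) v.
Proof.
have [hj|hj] := ltnP j (size A); first by rewrite (nth_map [::]).
by rewrite !nth_default ?size_map // dot_nil.
Qed.

Lemma dot_mulmv c A v : dot c (mulmv A v) = dot (lincomb c A) v.
Proof.
rewrite /dot !vsumE; under eq_bigr do rewrite nth_mulmv /dot vsumE mulr_sumr.
rewrite exchange_big; apply: eq_bigr => k _ /=.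
by rewrite nth_mkseq // vsumE mulr_suml; apply: eq_bigr => j _; rewrite mulrA.
Qed.

Lemma dot_unitv i v : (i < 8)%N -> dot (unitv i) v = v`_i.
Proof.
move=> hi; rewrite /dot vsumE (bigD1 (Ordinal hi)) //= nth_mkseq // eqxx mul1r.
rewrite big1 ?addr0 // => k hk; rewrite nth_mkseq //.
suff /negbTE -> : (k : nat) != i by rewrite mul0r.
by apply: contra hk => /eqP hki; apply/eqP/val_inj.
Qed.

Lemma dot_lincomb_eq0 c A v : (forall j, dot (nth [::] A j) v = 0) -> dot (lincomb c A) v = 0.
Proof.
by move=> hA; rewrite -dot_mulmv /dot vsumE big1 // => k _; rewrite nth_mulmv hA mulr0.
Qed.

Lemma dot_indicator Ys ys (g : word -> int) : (size Ys <= 8)%N -> all (mem Ys) ys ->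
  dot (indicator Ys ys) [seq g y | y <- Ys] = \sum_(y <- ys) g y.
Proof.
move=> hYs; elim: ys => [|y ys IH] /=; first by rewrite big_nil dot_nil.
case/andP => hy hys; rewrite dot_vadd IH // big_cons dot_unitv; last first.
  by apply: leq_trans hYs; rewrite index_mem.
by rewrite (nth_map [::]) ?index_mem // nth_index.
Qed.

(** * The certificate *)

Definition gamma_rows (d : bool) : seq (seq int) :=
  if d then
    [:: [:: 0; 0; 1; 0; 0; 0; 0; 0];
        [:: 0; 0; 1; 0; 0; 0; 0; 0];
        [:: 0; 0; 0; 0; 0; 0; 0; 0];
        [:: 0; 0; 0; 0; 0; 1; 0; 0];
        [:: 0; 0; 0; 0; 0; 1; 0; 0];
        [:: 0; 0; 0; 0; 0; 0; 0; 0];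
        [:: 0; 0; 0; 0; 0; 0; 0; 1];
        [:: 0; 0; 0; 0; 0; 0; 0; 0]]
  else
    [:: [:: 0; 1; 0; 0; 0; 0; 0; 0];
        [:: 0; 0; 0; 1; 0; 0; 0; 0];
        [:: -1; 1; 0; 1; 0; 0; 0; 0];
        [:: 0; 0; 0; 0; 1; 0; 0; 0];
        [:: 0; 0; 0; 0; 0; 0; 1; 0];
        [:: -1; 0; 0; 2; 1; 0; 0; 0];
        [:: 1; -1; 0; -3; 3; 0; 1; 0];
        [:: -1; -1; 0; 2; 3; 0; 1; 0]].

Record transition := Trans {
  target : nat;
  consumed : word;
  coef_cof : seq (seq int);
  rels_cof : seq (seq int) }.

(* A state certifies, for every digit string w leading to it, a split
   fibpre w = U ++ sig with (unil -> U = [::]), such that the values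
   S = (nfact (U ++ y))_(y in tracked) satisfy gamma (rev w) *m uvec = coef * S
   and rels * S = 0.  On a digit, the prefix consumed of sig moves into U,
   which becomes phi (U ++ consumed); coef_cof and rels_cof are the
   multipliers of rels witnessing that both identities are preserved. *)
Record state := State {
  sig : word;
  unil : bool;
  tracked : seq word;
  coef : seq (seq int);
  rels : seq (seq int);
  on_a : transition;
  on_b : option transition }.

Definition certificate : seq state := [::
  State [::] true
     [:: [::]; [:: true]]
     [:: [:: 1; 0];
        [:: 1; 0];
        [:: 1; 1];
        [:: 1; 0];
        [:: 1; 0];
        [:: 2; 1];
        [:: 1; 0];
        [:: 4; 1]]
     [:: [:: 0; 1]]
     (Trans 0 [::] [::] [::])
     (Some (Trans 1 [::] [::] [:: [:: 1]]));
  State [:: false] true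
     [:: [::]; [:: false]; [:: true]]
     [:: [:: 0; 1; 0];
        [:: 0; 1; 0];
        [:: 0; 0; 0];
        [:: 1; 1; 1];
        [:: 1; 1; 1];
        [:: 0; 0; 0];
        [:: 3; 1; 2];
        [:: 0; 0; 0]]
     [:: [:: -1; 1; 0]; [:: 0; 0; 1]]
     (Trans 3 [::]
       [::]
       [:: [:: 0; 1]; [:: 0; 0]; [:: 0; 1]; [:: 1; 0]])
     None;
  State [:: false; false; true] false
     [:: [:: false]; [:: false; false]; [:: false; true]; [:: false; false; false];
         [:: false; false; true]]
     [:: [:: 0; 0; 0; 0; 1];
        [:: 0; 1; 0; 0; 1];
        [:: 0; 1; 0; 0; 1];
        [:: 0; 1; 0; 0; 1];
        [:: 1; 2; 1; 0; 1];
        [:: 0; 2; 0; 1; 2];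
        [:: 1; 2; 1; 0; 1];
        [:: 1; 5; 1; 2; 4]]
     [:: [:: -1; 1; 0; 0; 0]; [:: -1; 0; 0; 1; 0]]
     (Trans 4 [:: false]
       [:: [:: 0; 0];
          [:: 0; 0];
          [:: 1; -1];
          [:: 0; 0];
          [:: 0; 0];
          [:: 1; -1];
          [:: 0; 0];
          [:: 1; -1]]
       [:: [:: 0; 0]; [:: -1; 1]])
     (Some (Trans 7 [:: false] [::] [:: [:: 0; 0]; [:: -1; 1]]));
  State [:: false; true] true
     [:: [::]; [:: false]; [:: true]; [:: false; false]; [:: false; true]]
     [:: [:: 0; 0; 0; 0; 1];
        [:: 0; 1; 0; 0; 1];
        [:: 0; 1; 0; 0; 1];
        [:: 0; 1; 0; 0; 1];
        [:: 1; 2; 1; 0; 1];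
        [:: 0; 2; 0; 1; 2];
        [:: 1; 2; 1; 0; 1];
        [:: 1; 5; 1; 2; 4]]
     [:: [:: -1; 1; 0; 0; 0];
        [:: 0; 0; 1; 0; 0];
        [:: -1; 0; 0; 1; 0];
        [:: -1; 0; 0; 0; 1]]
     (Trans 5 [::]
       [:: [:: 0; 0; 0; 0];
          [:: 0; 0; 0; 0];
          [:: 1; 0; -1; 0];
          [:: 0; 0; 0; 0];
          [:: 0; 0; 0; 0];
          [:: 1; 0; -1; 0];
          [:: 0; 0; 0; 0];
          [:: 1; 0; -1; 0]]
       [:: [:: 0; 0; 0; 0];
          [:: 1; -1; 0; 0];
          [:: 1; -2; 0; 1];
          [:: 0; -1; 1; 0]])
     (Some (Trans 8 [::]
         [::]
         [:: [:: 1; -1; 0; 0];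
            [:: 1; -2; 0; 1];
            [:: 1; -2; 0; 1];
            [:: 0; -1; 1; 0]]));
  State [:: false; true; false] false
     [:: [:: false]; [:: false; false]; [:: false; true]; [:: false; true; false];
         [:: false; true; false; true]]
     [:: [:: 0; 0; 0; 1; 0];
        [:: 0; 0; 0; 1; 0];
        [:: 0; 0; 0; 1; 1];
        [:: 1; 0; 1; 1; 0];
        [:: 1; 0; 1; 1; 0];
        [:: 1; 0; 1; 2; 1];
        [:: 3; 1; 3; 1; 0];
        [:: 4; 0; 4; 4; 1]]
     [:: [:: -1; 1; 0; 0; 0]; [:: 0; 0; -1; 0; 1]]
     (Trans 2 [:: false] [::] [::])
     (Some (Trans 6 [:: false; true] [::] [::]));
  State [:: false; true; false] true
     [:: [:: false]; [:: false; false]; [:: false; true]; [:: false; true; false];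
         [:: false; true; false; true]]
     [:: [:: 0; 0; 0; 1; 0];
        [:: 0; 0; 0; 1; 0];
        [:: 0; 0; 0; 1; 1];
        [:: 1; 0; 1; 1; 0];
        [:: 1; 0; 1; 1; 0];
        [:: 1; 0; 1; 2; 1];
        [:: 3; 1; 3; 1; 0];
        [:: 4; 0; 4; 4; 1]]
     [:: [:: -1; 1; 0; 0; 0];
        [:: -1; 0; 1; 0; 0];
        [:: -2; 0; 0; 1; 0];
        [:: -1; 0; 0; 0; 1]]
     (Trans 2 [:: false] [::] [::])
     (Some (Trans 6 [:: false; true] [::] [::]));
  State [:: false; true; false] false
     [:: [:: false]; [:: false; false]; [:: false; true]; [:: false; true; false]]
     [:: [:: 0; 0; 0; 1];
        [:: 0; 0; 0; 1];
        [:: 0; 0; 0; 0];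
        [:: 1; 0; 1; 1];
        [:: 1; 0; 1; 1];
        [:: 0; 0; 0; 0];
        [:: 3; 1; 3; 1];
        [:: 0; 0; 0; 0]]
     [:: [:: -1; 1; 0; 0]]
     (Trans 2 [:: false] [::] [::])
     None;
  State [:: false; true; false; false] false
     [:: [:: false]; [:: false; true]; [:: false; true; false];
         [:: false; true; false; false]; [:: false; true; false; true]]
     [:: [:: 0; 0; 0; 1; 0];
        [:: 0; 0; 0; 1; 0];
        [:: 0; 0; 0; 0; 0];
        [:: 0; 0; 1; 1; 1];
        [:: 0; 0; 1; 1; 1];
        [:: 0; 0; 0; 0; 0];
        [:: 1; 1; 3; 1; 2];
        [:: 0; 0; 0; 0; 0]]
     [:: [:: 0; 0; -1; 1; 0]; [:: 0; -1; 0; 0; 1]]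
     (Trans 9 [:: false; true] [::] [:: [:: 0; 0]; [:: 1; 0]])
     None;
  State [:: false; true; false; false] true
     [:: [:: false]; [:: false; true]; [:: false; true; false];
         [:: false; true; false; false]; [:: false; true; false; true]]
     [:: [:: 0; 0; 0; 1; 0];
        [:: 0; 0; 0; 1; 0];
        [:: 0; 0; 0; 0; 0];
        [:: 0; 0; 1; 1; 1];
        [:: 0; 0; 1; 1; 1];
        [:: 0; 0; 0; 0; 0];
        [:: 1; 1; 3; 1; 2];
        [:: 0; 0; 0; 0; 0]]
     [:: [:: -1; 1; 0; 0; 0];
        [:: -2; 0; 1; 0; 0];
        [:: -2; 0; 0; 1; 0];
        [:: -1; 0; 0; 0; 1]]
     (Trans 9 [:: false; true] [::] [:: [:: 0; 0; 0; 0]; [:: 0; -1; 1; 0]])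
     None;
  State [:: false; true; false; true] false
     [:: [:: false]; [:: false; true]; [:: false; true; false];
         [:: false; true; false; false]; [:: false; true; false; true]]
     [:: [:: 0; 0; 0; 0; 1];
        [:: 0; 0; 1; 0; 1];
        [:: 0; 0; 1; 0; 1];
        [:: 0; 0; 1; 0; 1];
        [:: 1; 1; 2; 0; 1];
        [:: 0; 0; 2; 1; 2];
        [:: 1; 1; 2; 0; 1];
        [:: 1; 1; 5; 2; 4]]
     [:: [:: 0; 0; -1; 1; 0]; [:: 0; -1; 0; 0; 1]]
     (Trans 4 [:: false; true]
       [:: [:: 0; 0];
          [:: 0; 0];
          [:: -1; 0];
          [:: 0; 0];
          [:: 0; 0];
          [:: -1; 0];
          [:: 0; 0];
          [:: -1; 0]]
       [:: [:: 0; 0]; [:: 1; 0]])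
     (Some (Trans 7 [:: false; true] [::] [:: [:: 0; 0]; [:: 1; 0]]))].

Definition cert (s : nat) : state :=
  nth (State [::] false [::] [::] [::] (Trans 0 [::] [::] [::]) None) certificate s.

Definition values (st : state) (U : word) : seq int :=
  [seq (nfact (U ++ y))%:Z | y <- tracked st].

Definition transfer (st : state) (t : transition) : seq (seq int) :=
  [seq indicator (tracked st)
         [seq y <- odflt [::] (expand (unil st) (phi (consumed t) ++ y')) | ~~ has_bb y]
  | y' <- tracked (cert (target t))].

Definition trans_shape (st : state) (d : bool) (t : transition) : bool :=
  let st' := cert (target t) in
  [&& (target t < size certificate)%N,
      prefix (consumed t) (sig st),
      sig st' == phi (drop (size (consumed t)) (sig st)) ++ (if d then [:: false] else [::]),
      d || isSome (on_b st') &
      unil st' ==> unil st && (consumed t == [::])].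

Definition trans_expands (st : state) (t : transition) : bool :=
  all (fun y' => if expand (unil st) (phi (consumed t) ++ y') is Some ys
                 then all (mem (tracked st)) [seq y <- ys | ~~ has_bb y] else false)
      (tracked (cert (target t))).

Definition trans_coef (st : state) (d : bool) (t : transition) : bool :=
  all (fun i => eqv (vsub (lincomb (nth [::] (gamma_rows d) i) (coef st))
                          (lincomb (nth [::] (coef (cert (target t))) i) (transfer st t)))
                    (lincomb (nth [::] (coef_cof t) i) (rels st)))
      (iota 0 8).

Definition trans_rels (st : state) (t : transition) : bool :=
  let st' := cert (target t) in
  all (fun j => eqv (lincomb (nth [::] (rels st') j) (transfer st t))
                    (lincomb (nth [::] (rels_cof t) j) (rels st)))
      (iota 0 (size (rels st'))).

Definition check_trans (st : state) (d : bool) (t : transition) : bool :=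
  [&& trans_shape st d t, trans_expands st t, trans_coef st d t & trans_rels st t].

Definition check_state (st : state) : bool :=
  [&& (size (tracked st) <= 8)%N, sig st \in tracked st,
      eqv (nth [::] (coef st) 0) (unitv (index (sig st) (tracked st))),
      check_trans st false (on_a st) &
      if on_b st is Some t then check_trans st true t else true].

Definition check_initial : bool :=
  let st := cert 0 in
  [&& sig st == [::], isSome (on_b st), tracked st == [:: [::]; [:: true]],
      eqv (mulmv (coef st) [:: 1; 0]) [:: 1; 1; 1; 1; 1; 2; 1; 4] &
      all (fun j => dot (nth [::] (rels st) j) [:: 1; 0] == 0) (iota 0 (size (rels st)))].

Lemma certificate_ok : all check_state certificate && check_initial.
Proof. by vm_compute. Qed.

(** * The invariant *)

Definition colv (v : seq int) : 'cV[int]_8 := \col_(i < 8) v`_i.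

Lemma mx_of_mul_colv A v : mx_of A *m colv v = colv (mulmv A v).
Proof.
apply/matrixP => i j; rewrite !mxE nth_mulmv /dot vsumE.
by apply: eq_bigr => k _; rewrite !mxE.
Qed.

Lemma colv_eqv x y : eqv x y -> colv x = colv y.
Proof.
move=> /allP hxy; apply/matrixP => i j; rewrite !mxE.
by apply/eqP/hxy; rewrite mem_iota /= ltn_ord.
Qed.

Lemma gamma_rcons w d : gamma (rev (rcons w d)) = mx_of (gamma_rows d) *m gamma (rev w).
Proof. by rewrite rev_rcons; case: d. Qed.

Definition invariant (w : word) (st : state) (U : word) : Prop :=
  [/\ fibpre w = U ++ sig st, unil st -> U = [::],
      gamma (rev w) *m uvec = colv (mulmv (coef st) (values st U)) &
      forall j, dot (nth [::] (rels st) j) (values st U) = 0].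

Lemma values_step st t U : (size (tracked st) <= 8)%N -> trans_expands st t ->
  (unil st -> U = [::]) ->
  values (cert (target t)) (phi (U ++ consumed t)) = mulmv (transfer st t) (values st U).
Proof.
move=> hsize /allP hexp hU; rewrite /values /mulmv /transfer -!map_comp.
apply/eq_in_map => y' /hexp /=; case E: (expand _ _) => [ys|] // hys.
rewrite dot_indicator // phi_cat -catA (nfact_expand E hU) big_filter.
by rewrite (big_morph Posz PoszD (erefl 0%:Z)).
Qed.

Lemma invariant_step w st d t U : (size (tracked st) <= 8)%N -> check_trans st d t ->
  invariant w st U -> invariant (rcons w d) (cert (target t)) (phi (U ++ consumed t)).
Proof.
move=> hsize /and4P [/and5P [_ /prefixP [rest hsig] /eqP hsig' _ /implyP hunil]].
move=> hexp /allP hcoef /allP hrels [hpre hU hgamma hrels0].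
have hval := values_step hsize hexp hU; split.
- by rewrite fibpre_rcons hpre hsig' hsig drop_size_cat // !phi_cat !catA.
- by move/hunil/andP => [/hU -> /eqP ->].
- rewrite gamma_rcons -mulmxA hgamma mx_of_mul_colv hval; apply/matrixP => i j.
  rewrite !mxE !nth_mulmv !dot_mulmv; apply/eqP; rewrite -subr_eq0 -dot_vsub.
  by rewrite (dot_eqv _ (hcoef i _)) ?dot_lincomb_eq0 // mem_iota /= ltn_ord.
- move=> j; rewrite hval; have [hj|hj] := ltnP j (size (rels (cert (target t)))).
    by rewrite dot_mulmv (dot_eqv _ (hrels j _)) ?dot_lincomb_eq0 // mem_iota.
  by rewrite nth_default // dot_nil.
Qed.

Lemma check_cert s : (s < size certificate)%N -> check_state (cert s).
Proof. by have /andP [/all_nthP hall _] := certificate_ok; apply: hall. Qed.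

Lemma invariant_nil : invariant [::] (cert 0) [::].
Proof.
have /andP [_ /and5P [/eqP hsig _ /eqP hY hK /allP hrels]] := certificate_ok.
have hval : values (cert 0) [::] = [:: 1; 0] by rewrite /values hY /= nfact_nil nfact_head_b.
split=> [|//||]; first by rewrite hsig.
  by rewrite mul1mx hval (colv_eqv hK).
move=> j; rewrite hval; have [hj|hj] := ltnP j (size (rels (cert 0))).
  by apply/eqP/hrels; rewrite mem_iota.
by rewrite nth_default // dot_nil.
Qed.

Lemma invariant_exists w : no11 w -> exists s U,
  [/\ (s < size certificate)%N, ~~ last false w -> isSome (on_b (cert s))
    & invariant w (cert s) U].
Proof.
elim/last_ind: w => [|w d IH] hw.
  have /andP [_ /and5P [_ hb _ _ _]] := certificate_ok.
  by exists 0%N, [::]; split=> //; apply: invariant_nil.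
move: hw => /no11_rcons [hw hlast]; have [s [U [hs hb hinv]]] := IH hw.
have /and5P [hsize _ _ ha hbtr] := check_cert hs.
have [t htr] : exists t, check_trans (cert s) d t.
  case: d hlast => [/(_ isT) /hb|_]; last by exists (on_a (cert s)).
  by case: (on_b (cert s)) hbtr => // t htr _; exists t.
have /and4P [/and5P [ht _ _ hdb _] _ _ _] := htr.
exists (target t), (phi (U ++ consumed t)); split=> //.
  by rewrite last_rcons; case: d {htr hlast} hdb.
exact: invariant_step hsize htr hinv.
Qed.

Lemma invariant_value w st U : check_state st -> invariant w st U ->
  (tvec *m gamma (rev w) *m uvec) 0 0 = (nfact (fibpre w))%:Z.
Proof.
case/and5P => hsize hmem hK _ _ [hpre _ hgamma _]; rewrite -mulmxA hgamma.
rewrite !mxE !big_ord_recl big_ord0 !mxE /= !mul0r !addr0 mul1r.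
rewrite nth_mulmv (dot_eqv _ hK) dot_unitv; last by apply: leq_trans hsize; rewrite index_mem.
by rewrite /values (nth_map [::]) ?index_mem // nth_index // hpre.
Qed.

Lemma V_is_nfact N : V_is N (nfact (fibprefix N)).
Proof.
exists (facts (fibprefix N)); split=> //; first exact: undup_uniq.
move=> ks; rewrite mem_facts /is_fact /is_factorization /no_lead0; split.
  by case/andP => /orP [/eqP ->|/eqP h] /eqP ->; split=> //; [left|right].
by case=> [[->|/eqP h] ->]; apply/andP; split=> //; rewrite ?h ?orbT.
Qed.

Theorem theorem2 (n : nat) (z : seq bool) :
  canonical_fib_rep n z ->
  exists v : nat, V_is n v /\ (tvec *m gamma (rev z) *m uvec) 0 0 = v%:Z.
Proof.
case=> _ hz <-; have [s [U [hs _ hinv]]] := invariant_exists hz.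
exists (nfact (fibpre z)); split; first by rewrite -(fibprefix_fibval hz); apply: V_is_nfact.
exact: invariant_value (check_cert hs) hinv.
Qed.
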